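(* For a word $w\in\mathcal{A}^*$ let $\iota(w)$ denote the word obtained from $w$ by deleting every occurrence of every letter that occurs more than once in $w$ (so $\iota(w)$ is the subsequence of letters occurring exactly once, in their order in $w$); this depends only on the element of ${\mathsf{stal}}$ represented by $w$. (1) Two elements $s,t\in{\mathsf{stal}}$ lie in the same connected component of $K({\mathsf{stal}})$ if and only if $s\equiv_{\mathrm{ev}}t$ and $\iota(s)$ and $\iota(t)$ are cyclic rotations of each other as words (i.e. $\iota(s)=pq$ and $\iota(t)=qp$ for some words $p,q$). (2) The maximum diameter of a connected component of $K({\mathsf{stal}})$ is $3$. (3) The maximum diameter of a connected component of $K({\mathsf{stal}}_n)$ is $3$ if $n\ge3$, is $1$ if $n=2$, and is $0$ if $n=1$.
   Context: Let $\mathcal{A}=\{1<2<3<\cdots\}$ be the ordered alphabet of positive integers and $\mathcal{A}_n=\{1<2<\cdots<n\}$. For a monoid $M$ and $s,t\in M$, write $s\sim t$ if there exist $x,y\in M$ with $s=xy$ and $t=yx$ (a cyclic shift); $\sim^*$ is the reflexive–transitive closure of $\sim$. The cyclic shift graph $K(M)$ is the undirected graph with vertex set $M$ and an edge between $s$ and $t$ iff $s\sim t$; its connected components are the $\sim^*$-classes, and distances/diameters are graph distances in $K(M)$. The evaluation of a word $w$ is the tuple $(|w|_a)_{a}$ giving the number of occurrences of each letter $a$; all monoids considered are defined by presentations whose defining relations preserve evaluation, so the evaluation of an element is well defined, and $s\equiv_{\mathrm{ev}} t$ means $s$ and $t$ have the same evaluation. The stalactic monoid ${\mathsf{stal}}$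 is $\mathcal{A}^*$ modulo the congruence generated by the relations $bavb=abvb$ for all letters $a,b$ and words $v\in\mathcal{A}^*$; ${\mathsf{stal}}_n$ is defined by the same relations over $\mathcal{A}_n$. Equivalently, two words are equal in ${\mathsf{stal}}$ iff they have the same evaluation and the same order of rightmost occurrences of their letters. *)

From mathcomp Require Import all_boot.
From Stdlib Require Import Relations.
Set Implicit Arguments. Unset Strict Implicit. Unset Printing Implicit Defensive.

Definition alphA : pred nat := fun a => 0 < a.
Definition alphAn (n : nat) : pred nat := fun a => 0 < a <= n.

Definition word (P : pred nat) (w : seq nat) : bool := all P w.

Definition stal_step (P : pred nat) (u w : seq nat) : Prop :=
  word P u /\ word P w /\
  exists (x v y : seq nat) (a b : nat),
    u = x ++ [:: b; a] ++ v ++ [:: b] ++ y /\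
    w = x ++ [:: a; b] ++ v ++ [:: b] ++ y.

(* the congruence on P^* generated by the stalactic relations:
   equality in stal (P = alphA) or stal_n (P = alphAn n) *)
Definition stal_eq (P : pred nat) : relation (seq nat) :=
  clos_refl_sym_trans (seq nat) (stal_step P).

Definition cshift (P : pred nat) (u w : seq nat) : Prop :=
  exists x y : seq nat, word P x /\ word P y /\
    stal_eq P u (x ++ y) /\ stal_eq P w (y ++ x).

Fixpoint walk (P : pred nat) (k : nat) (u w : seq nat) : Prop :=
  match k with
  | 0 => stal_eq P u w
  | k'.+1 => exists z, word P z /\ walk P k' u z /\ cshift P z w
  end.

Definition dist_le (P : pred nat) (d : nat) (u w : seq nat) : Prop :=
  exists k, k <= d /\ walk P k u w.

Definition dist_eq (P : pred nat) (d : nat) (u w : seq nat) : Prop :=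
  walk P d u w /\ forall k, k < d -> ~ walk P k u w.

Definition connected (P : pred nat) (u w : seq nat) : Prop :=
  exists k, walk P k u w.

Definition max_diam (P : pred nat) (d : nat) : Prop :=
  (forall u w, word P u -> word P w -> connected P u w -> dist_le P d u w) /\
  (exists u w, word P u /\ word P w /\ dist_eq P d u w).

Definition iota_w (w : seq nat) : seq nat := [seq a <- w | count_mem a w == 1].

From mathcomp Require Import all_boot.
From Stdlib Require Import Relations.
Set Implicit Arguments. Unset Strict Implicit. Unset Printing Implicit Defensive.

(* An element of stal is determined by its evaluation and by the order of the rightmost
   occurrences of its letters ([undup_last], see [stal_eqP]).  A cyclic shift xy ~ yx keeps
   the evaluation and rotates iota, which gives the invariants of a component.  Conversely,
   let iota(u) = pq and let r list the repeated letters.  Moving one copy of each repeated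
   letter to the end is a cyclic shift u ~ z1 where z1 has order p q r; writing K for the
   remaining copies of the repeated letters, z1 = (p r)(q K) ~ (q K)(p r) = z2 has order
   q p r; and z2 ~ w by the first step backwards.  So components have diameter at most 3.
   The one-step neighbours of an element have finitely many possible orders, and
   enumerating them shows that 3321 and 3312 are at distance 3.  Over two letters an
   order has length at most 2, hence is a rotation of any other one, and one shift
   suffices. *)

Lemma perm_count_mem (s t : seq nat) :
  (forall a, count_mem a s = count_mem a t) -> perm_eq s t.
Proof. by move=> st; apply/allP => a _ /=; rewrite st. Qed.

Lemma count_mem_gt0 (a : nat) s : (0 < count_mem a s) = (a \in s).
Proof. by rewrite -has_count has_pred1. Qed.

Fixpoint undup_last (s : seq nat) : seq nat :=
  if s is a :: s' then
    if a \in s' then undup_last s' else a :: undup_last s'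
  else [::].

Lemma mem_undup_last s : undup_last s =i s.
Proof.
elim: s => [//|a s IH] b /=.
by case: ifP => Ha; rewrite ?inE IH //; case: eqVneq => // ->.
Qed.

Lemma undup_last_uniq s : uniq (undup_last s).
Proof.
by elim: s => [//|a s IH] /=; case: ifP => //= Ha; rewrite mem_undup_last Ha.
Qed.

Lemma undup_last_id s : uniq s -> undup_last s = s.
Proof. by elim: s => [//|a s IH] /= /andP[/negbTE-> /IH->]. Qed.

Lemma undup_last_cat s t :
  undup_last (s ++ t) = [seq a <- undup_last s | a \notin t] ++ undup_last t.
Proof.
elim: s => [//|a s IH] /=; rewrite mem_cat.
by case: (boolP (a \in s)) => //= _; case: (a \in t); rewrite /= IH.
Qed.

Lemma undup_last_nseq n a : 0 < n -> undup_last (nseq n a) = [:: a].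
Proof.
case: n => [//|n] _; elim: n => [//|n IH].
rewrite -[nseq n.+2 a]/(a :: nseq n.+1 a) {1}/undup_last -/undup_last IH.
by rewrite mem_nseq /= eqxx.
Qed.

Definition blocks (o : seq nat) (f : nat -> nat) : seq nat :=
  flatten [seq nseq (f a) a | a <- o].

Lemma blocks_cons a o f : blocks (a :: o) f = nseq (f a) a ++ blocks o f.
Proof. by []. Qed.

Lemma blocks_cat o1 o2 f : blocks (o1 ++ o2) f = blocks o1 f ++ blocks o2 f.
Proof. by rewrite /blocks map_cat flatten_cat. Qed.

Lemma eq_in_blocks o f g : {in o, f =1 g} -> blocks o f = blocks o g.
Proof. by move=> fg; congr flatten; apply/eq_in_map => a /fg ->. Qed.

Lemma mem_blocks o f b : (b \in blocks o f) = (b \in o) && (0 < f b).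
Proof.
elim: o => [//|a o IH]; rewrite blocks_cons mem_cat IH inE mem_nseq.
by case: eqVneq => [->|_] /=; [case: (0 < f a); case: (a \in o) | rewrite andbF].
Qed.

Lemma count_blocks o f b : uniq o ->
  count_mem b (blocks o f) = if b \in o then f b else 0.
Proof.
elim: o => [//|a o IH] /= /andP[ao /IH{}IH].
rewrite blocks_cons count_cat count_nseq IH in_cons.
case: (eqVneq b a) => [->|ba] /=; first by rewrite eqxx (negbTE ao) addn0 mul1n.
by rewrite eq_sym (negbTE ba).
Qed.

Lemma undup_last_blocks o f : uniq o -> {in o, forall a, 0 < f a} ->
  undup_last (blocks o f) = o.
Proof.
elim: o => [//|a o IH] /= /andP[ao uo] fo.
rewrite blocks_cons undup_last_cat undup_last_nseq ?fo ?mem_head //.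
rewrite IH // => [|b bo]; last by rewrite fo // inE bo orbT.
by rewrite /= mem_blocks (negbTE ao).
Qed.

Section StalacticEquality.
Variable P : pred nat.

Lemma word_cons a s : word P (a :: s) = P a && word P s.
Proof. by []. Qed.

Lemma word_cat s t : word P (s ++ t) = word P s && word P t.
Proof. exact: all_cat. Qed.

Lemma sub_word s t : word P s -> {subset t <= s} -> word P t.
Proof. by move=> /allP Ps ts; apply/allP => x /ts /Ps. Qed.

Lemma perm_word s t : perm_eq s t -> word P s -> word P t.
Proof. by move=> st Ps; apply: sub_word Ps _ => x; rewrite (perm_mem st). Qed.

Lemma word_blocks o f : word P o -> word P (blocks o f).
Proof. by move=> Po; apply: sub_word Po _ => x; rewrite mem_blocks => /andP[]. Qed.

Lemma stal_eq_cons a u v : P a -> stal_eq P u v -> stal_eq P (a :: u) (a :: v).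
Proof.
move=> Pa; elim=> [x y [Px [Py [x0 [v0 [y0 [a0 [b0 [ex ey]]]]]]]]|x|x y _|x y z _ xy _ yz].
- apply: rst_step; rewrite /stal_step !word_cons Pa Px Py; do 2!split => //.
  by exists (a :: x0), v0, y0, a0, b0; rewrite ex ey.
- exact: rst_refl.
- exact: rst_sym.
- exact: rst_trans xy yz.
Qed.

Lemma stal_eq_push a p q : P a -> word P p -> word P q ->
  stal_eq P (a :: p ++ a :: q) (p ++ a :: a :: q).
Proof.
move=> Pa; elim: p => [|b p IH] /= Pp Pq; first exact: rst_refl.
move: Pp => /andP[Pb Pp].
apply: rst_trans (stal_eq_cons Pb (IH Pp Pq)).
have Pw : word P (p ++ a :: q) by rewrite word_cat Pp /= Pa.
apply: rst_step; rewrite /stal_step !word_cons Pa Pb Pw; do 2!split => //.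
by exists [::], p, q, b, a.
Qed.

Lemma stal_eq_cons_blocks a o f : P a -> word P o -> uniq o -> a \in o -> 0 < f a ->
  stal_eq P (a :: blocks o f) (blocks o (fun b => (a == b) + f b)).
Proof.
move=> Pa Po uo ao fa; case/splitPr: ao Po uo => o1 o2; rewrite cat_uniq /= negb_or.
rewrite word_cat word_cons => /and3P[Po1 _ Po2] /and3P[_ /andP[a_o1 _] /andP[a_o2 _]].
rewrite !blocks_cat !blocks_cons eqxx.
have fa' : forall o', a \notin o' -> blocks o' (fun b => (a == b) + f b) = blocks o' f.
  by move=> o' ao; apply: eq_in_blocks => b bo; case: eqVneq bo ao => // -> ->.
rewrite !fa' //.
case: (f a) fa => // c _; rewrite add1n -cat_cons.
apply: stal_eq_push; rewrite ?word_blocks // word_cat word_blocks // andbT.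
by apply/allP => x; rewrite mem_nseq => /andP[_ /eqP->].
Qed.

Definition stal_nf (s : seq nat) : seq nat :=
  blocks (undup_last s) (fun a => count_mem a s).

Lemma stal_eq_nf s : word P s -> stal_eq P s (stal_nf s).
Proof.
elim: s => [_|a s IH]; first exact: rst_refl.
rewrite word_cons => /andP[Pa Ps]; apply: rst_trans (stal_eq_cons Pa (IH Ps)) _.
rewrite /stal_nf /=; case: ifP => [as_|/negbT as_].
  apply: stal_eq_cons_blocks; rewrite ?undup_last_uniq ?mem_undup_last //.
  - by apply: sub_word Ps _ => x; rewrite mem_undup_last.
  - by rewrite count_mem_gt0.
have cs : {in undup_last s, forall b, (a == b) + count_mem b s = count_mem b s}.
  by move=> b; rewrite mem_undup_last; case: eqVneq as_ => // -> /negbTE->.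
by rewrite blocks_cons eqxx (count_memPn as_) (eq_in_blocks cs); apply: rst_refl.
Qed.

Lemma stal_step_inv u w :
  stal_step P u w -> perm_eq u w /\ undup_last u = undup_last w.
Proof.
move=> [_ [_ [x [v [y [a [b [-> ->]]]]]]]]; split.
  by rewrite perm_cat2l; apply/permP => p /=; rewrite addnCA.
rewrite undup_last_cat [in RHS]undup_last_cat; congr (_ ++ _).
  apply: eq_filter => c; rewrite (mem_cat c [:: b; a]) (mem_cat c [:: a; b]) !inE.
  by case: (c == a); case: (c == b).
have bv : b \in v ++ [:: b] ++ y by rewrite !mem_cat inE eqxx orbT.
rewrite !undup_last_cat; congr (_ ++ _) => /=; rewrite !inE.
by case: eqVneq => [->|_]; rewrite /= ?bv.
Qed.

Lemma stal_eq_inv u w :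
  stal_eq P u w -> perm_eq u w /\ undup_last u = undup_last w.
Proof.
elim=> [x y /stal_step_inv //|x //|x y _ [xy xy']|x y z _ [xy xy'] _ [yz yz']].
- by rewrite perm_sym xy xy'.
- by rewrite (perm_trans xy yz) xy' yz'.
Qed.

Lemma stal_eqP u w : word P u -> word P w ->
  stal_eq P u w <-> perm_eq u w /\ undup_last u = undup_last w.
Proof.
move=> Pu Pw; split=> [|[/permP uw uw']]; first exact: stal_eq_inv.
have nf_uw : stal_nf u = stal_nf w by rewrite /stal_nf uw'; apply: eq_in_blocks => a _.
by apply: rst_trans (stal_eq_nf Pu) _; rewrite nf_uw; apply: rst_sym; apply: stal_eq_nf.
Qed.

End StalacticEquality.

Lemma undup_last_cat_disjoint s t : uniq s -> ~~ has (mem t) s ->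
  undup_last (s ++ t) = s ++ undup_last t.
Proof.
move=> us st; rewrite undup_last_cat undup_last_id //; congr (_ ++ _).
by apply/all_filterP; rewrite all_predC.
Qed.

Lemma undup_last_cat_sub s t : {subset s <= t} -> undup_last (s ++ t) = undup_last t.
Proof.
move=> st; rewrite undup_last_cat (eq_in_filter (a2 := pred0)) ?filter_pred0 //.
by move=> a; rewrite mem_undup_last => /st ->.
Qed.

Lemma filter_undup_last (p : pred nat) s : {in p, forall a, count_mem a s <= 1} ->
  [seq a <- s | p a] = [seq a <- undup_last s | p a].
Proof.
elim: s => [//|a s IH] /= ps.
have {}IH : [seq a <- s | p a] = [seq a <- undup_last s | p a].
  by apply: IH => b /ps /=; apply: leq_trans; apply: leq_addl.
case: (boolP (p a)) => pa; last by case: ifP; rewrite /= ?(negbTE pa) IH.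
have := ps a pa; rewrite /= eqxx add1n ltnS leqn0 => /eqP/count_memPn as_.
by rewrite (negbTE as_) /= pa IH.
Qed.

Lemma iota_w_undup_last s : iota_w s = [seq a <- undup_last s | count_mem a s == 1].
Proof. by apply: filter_undup_last => a /eqP ->. Qed.

Definition is_rotation (s t : seq nat) : Prop :=
  exists p q, s = p ++ q /\ t = q ++ p.

Lemma is_rotationP s t : is_rotation s t <-> exists2 k, k <= size s & t = rot k s.
Proof.
split=> [[p [q [-> ->]]]|[k _ ->]].
  by exists (size p); rewrite ?size_cat ?leq_addr ?rot_size_cat.
by exists (take k s), (drop k s); rewrite cat_take_drop.
Qed.

Lemma is_rotation_refl s : is_rotation s s.
Proof. by exists s, [::]; rewrite cats0. Qed.

Lemma is_rotation_trans s t v : is_rotation s t -> is_rotation t v -> is_rotation s v.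
Proof.
move=> /is_rotationP[k ks ->] /is_rotationP[m]; rewrite size_rot => ms ->.
apply/is_rotationP; rewrite rot_add_mod //; case: ifP => [|_]; first by exists (m + k).
by exists (m + k - size s); rewrite // leq_subLR leq_add.
Qed.

Lemma perm_small_rotation s t : size s <= 2 -> perm_eq s t -> is_rotation s t.
Proof.
case: s => [_|a s].
  by rewrite perm_sym => /perm_small_eq-> //; apply: is_rotation_refl.
rewrite ltnS perm_sym => hs /perm_consP[i [u [ti /perm_small_eq us]]].
apply/is_rotationP; exists (size (a :: s) - i); rewrite ?leq_subr //.
by rewrite -[rot _ _]/(rotr i (a :: s)) -us // -ti rotK.
Qed.

Lemma iota_w_catC x y : is_rotation (iota_w (x ++ y)) (iota_w (y ++ x)).
Proof.
rewrite /iota_w (eq_filter (a2 := fun a => count_mem a (x ++ y) == 1)); last first.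
  by move=> a; rewrite !count_cat addnC.
by rewrite !filter_cat; do 2!eexists.
Qed.

Lemma iota_w_eq u w : perm_eq u w -> undup_last u = undup_last w -> iota_w u = iota_w w.
Proof.
by move=> /permP uw uw'; rewrite !iota_w_undup_last uw'; apply: eq_filter => a; rewrite uw.
Qed.

(* [shed s] is [s] (in normal form) with one copy of each repeated letter removed. *)
Definition shed (s : seq nat) : seq nat :=
  blocks (undup_last s) (fun a => count_mem a s - (1 < count_mem a s)).

Section Shed.
Variables s r : seq nat.
Hypotheses (r_uniq : uniq r) (mem_r : forall a, (a \in r) = (1 < count_mem a s)).

Lemma shed_gt0 : {in s, forall a, 0 < count_mem a s - (1 < count_mem a s)}.
Proof. by move=> a; rewrite -count_mem_gt0; case: (count_mem a s) => [|[|]]. Qed.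

Lemma mem_shed : shed s =i s.
Proof.
by move=> a; rewrite mem_blocks mem_undup_last; case: (boolP (a \in s)) => // /shed_gt0.
Qed.

Lemma count_shed_cat a : count_mem a (r ++ shed s) = count_mem a s.
Proof.
rewrite count_cat count_uniq_mem // count_blocks ?undup_last_uniq // mem_r mem_undup_last.
case: (boolP (a \in s)) => [|/count_memPn-> //]; rewrite -count_mem_gt0.
by case: (count_mem a s) => [|[|]].
Qed.

Lemma perm_shed_cat : perm_eq (shed s ++ r) s.
Proof. by apply: perm_count_mem => a; rewrite -count_shed_cat !count_cat addnC. Qed.

Lemma undup_last_shed : undup_last (shed s) = undup_last s.
Proof.
apply: undup_last_blocks; rewrite ?undup_last_uniq // => a.
by rewrite mem_undup_last => /shed_gt0.
Qed.

Lemma undup_last_shed_cat : undup_last (shed s ++ r) = iota_w s ++ r.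
Proof.
rewrite undup_last_cat undup_last_shed (undup_last_id r_uniq) iota_w_undup_last.
congr (_ ++ _); apply: eq_in_filter => a; rewrite mem_undup_last mem_r -count_mem_gt0.
by case: (count_mem a s) => [|[|]].
Qed.

End Shed.

Section CyclicShifts.
Variable P : pred nat.

Lemma cshift_of x y u w : word P x -> word P y ->
  perm_eq u (x ++ y) -> undup_last u = undup_last (x ++ y) ->
  perm_eq w (y ++ x) -> undup_last w = undup_last (y ++ x) -> cshift P u w.
Proof.
move=> Px Py ux ux' wy wy'; have Pxy : word P (x ++ y) by rewrite word_cat Px.
have Pyx : word P (y ++ x) by rewrite word_cat Py Px.
exists x, y; do 2!split=> //.
have Pu : word P u by apply: perm_word Pxy; rewrite perm_sym.
have Pw : word P w by apply: perm_word Pyx; rewrite perm_sym.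
by split; apply/stal_eqP.
Qed.

Lemma cshift_of_rotation u w : word P u -> perm_eq u w ->
  is_rotation (undup_last u) (undup_last w) -> cshift P u w.
Proof.
move=> Pu /permP uw [o1 [o2 [uo wo]]]; pose c a := count_mem a u.
have Pw : word P w by apply: perm_word Pu; apply/permP.
have [nf_u nf_u'] := stal_eq_inv (stal_eq_nf Pu).
have [nf_w nf_w'] := stal_eq_inv (stal_eq_nf Pw).
have nf_wE : stal_nf w = blocks o2 c ++ blocks o1 c.
  by rewrite /stal_nf wo -blocks_cat; apply: eq_in_blocks => a _; rewrite /c uw.
have Po : word P (o1 ++ o2) by apply: sub_word Pu _ => a; rewrite -uo mem_undup_last.
move: Po; rewrite word_cat => /andP[Po1 Po2].
apply: (@cshift_of (blocks o1 c) (blocks o2 c)); rewrite -?nf_wE -?blocks_cat -?uo //.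
- exact: (@word_blocks P o1 c).
- exact: (@word_blocks P o2 c).
Qed.

Lemma cshift_sym u w : cshift P u w -> cshift P w u.
Proof. by move=> [x [y [Px [Py [ux wy]]]]]; exists y, x. Qed.

Lemma cshift_inv u w : cshift P u w -> perm_eq u w /\ is_rotation (iota_w u) (iota_w w).
Proof.
move=> [x [y [_ [_ [/stal_eq_inv[ux ux'] /stal_eq_inv[wy wy']]]]]]; split.
  by rewrite (perm_trans ux) // perm_sym (perm_trans wy) // perm_catC.
by rewrite (iota_w_eq ux ux') (iota_w_eq wy wy'); apply: iota_w_catC.
Qed.

Lemma walk_inv k u w : walk P k u w -> perm_eq u w /\ is_rotation (iota_w u) (iota_w w).
Proof.
elim: k w => [|k IH] w /=.
  move=> /stal_eq_inv[uw uw']; rewrite uw (iota_w_eq uw uw').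
  by split=> //; apply: is_rotation_refl.
move=> [z [_ [/IH[uz uz'] /cshift_inv[zw zw']]]].
by rewrite (perm_trans uz zw); split=> //; apply: is_rotation_trans uz' zw'.
Qed.

Lemma cshift_shed s r : word P s -> uniq r ->
  (forall a, (a \in r) = (1 < count_mem a s)) -> cshift P s (shed s ++ r).
Proof.
move=> Ps ur mem_r; have rs : {subset r <= s}.
  by move=> a; rewrite mem_r -count_mem_gt0 => /ltnW.
apply: (@cshift_of r (shed s)); rewrite ?perm_refl //.
- exact: sub_word Ps rs.
- by apply: sub_word Ps _ => a; rewrite mem_shed.
- by apply: perm_count_mem => a; rewrite count_shed_cat.
- by rewrite undup_last_cat_sub ?undup_last_shed // => a /rs; rewrite mem_shed.
Qed.

(* With [K] the remaining copies of the repeated letters [r], [z1 = (p r)(q K)] and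
   [z2 = (q K)(p r)] in the monoid. *)
Lemma cshift_swap z1 z2 p q r : word P z1 -> perm_eq z1 z2 ->
  undup_last z1 = p ++ q ++ r -> undup_last z2 = q ++ p ++ r ->
  {in p ++ q, forall a, count_mem a z1 = 1} -> {in r, forall a, 1 < count_mem a z1} ->
  cshift P z1 z2.
Proof.
move=> Pz1 z12 z1pqr z2qpr single repeated.
have := undup_last_uniq z1; rewrite z1pqr cat_uniq => /and3P[up pqr].
rewrite cat_uniq => /and3P[uq qr ur].
have mem_z1 a : (a \in z1) = [|| a \in p, a \in q | a \in r].
  by rewrite -mem_undup_last z1pqr !mem_cat.
pose K := blocks r (fun a => (count_mem a z1).-1).
have mem_K : K =i r.
  move=> a; rewrite mem_blocks; case: (boolP (a \in r)) => // /repeated.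
  by case: (count_mem a z1) => [|[|]].
have p_qr a : a \in p -> (a \notin q) && (a \notin r).
  by move=> ap; rewrite -negb_or -mem_cat; apply: contraL ap; apply: (hasPn pqr).
have q_r a : a \in q -> a \notin r by move=> aq; apply: contraL aq; apply: (hasPn qr).
have q_p a : a \in q -> a \notin p by move=> aq; apply/negP => /p_qr/andP[]; rewrite aq.
have r_p a : a \in r -> a \notin p by move=> ar; apply/negP => /p_qr/andP[_]; rewrite ar.
have z1_prqK : perm_eq z1 ((p ++ r) ++ q ++ K).
  apply: perm_count_mem => a; rewrite -catA !count_cat count_blocks //.
  rewrite (count_uniq_mem _ up) (count_uniq_mem _ uq) (count_uniq_mem _ ur).
  case: (boolP (a \in p)) => ap.
    by move: (p_qr a ap) => /andP[/negbTE-> /negbTE->]; rewrite single // mem_cat ap.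
  case: (boolP (a \in q)) => aq.
    by rewrite (negbTE (q_r a aq)) single // mem_cat aq orbT.
  case: (boolP (a \in r)) => [/repeated|ar]; first by case: (count_mem a z1) => [|[|]].
  by apply/count_memPn; rewrite mem_z1 negb_or ap negb_or aq.
have rK : undup_last K = r.
  by apply: undup_last_blocks => // a /repeated; case: (count_mem a z1) => [|[|]].
apply: (@cshift_of (p ++ r) (q ++ K)) => //.
- by apply: sub_word Pz1 _ => a; rewrite mem_z1 mem_cat => /orP[]->; rewrite ?orbT.
- by apply: sub_word Pz1 _ => a; rewrite mem_z1 mem_cat mem_K => /orP[]->; rewrite ?orbT.
- rewrite z1pqr -catA undup_last_cat_disjoint //; last first.
    apply/hasPn => a /p_qr/andP[aq ar] /=.
    by rewrite !mem_cat mem_K (negbTE aq) (negbTE ar).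
  rewrite undup_last_cat_sub ?undup_last_cat_disjoint ?rK //; last first.
    by move=> a ar; rewrite mem_cat mem_K ar orbT.
  by apply/hasPn => a /q_r /=; rewrite mem_K.
- by rewrite perm_sym perm_catC -(permPl z1_prqK).
- rewrite z2qpr -catA undup_last_cat_disjoint //; last first.
    apply/hasPn => a aq /=.
    by rewrite !mem_cat mem_K (negbTE (q_r a aq)) (negbTE (q_p a aq)).
  rewrite undup_last_cat_sub ?undup_last_id //; last first.
    by move=> a; rewrite mem_K mem_cat orbC => ->.
  by rewrite cat_uniq up ur andbT; apply/hasPn => a /r_p.
Qed.

Lemma walk3_of_rotation u w p q : word P u -> word P w -> perm_eq u w ->
  iota_w u = p ++ q -> iota_w w = q ++ p -> walk P 3 u w.
Proof.
move=> Pu Pw uw iota_u iota_w.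
have count_uw a : count_mem a u = count_mem a w by move/permP: uw => /(_ (pred1 a)).
pose r := [seq a <- undup_last u | 1 < count_mem a u].
have ur : uniq r by rewrite filter_uniq ?undup_last_uniq.
have mem_ru a : (a \in r) = (1 < count_mem a u).
  by rewrite mem_filter mem_undup_last -count_mem_gt0 andb_idr // => /ltnW.
have mem_rw a : (a \in r) = (1 < count_mem a w) by rewrite mem_ru count_uw.
have Pz1 : word P (shed u ++ r) by apply: perm_word Pu; rewrite perm_sym perm_shed_cat.
have Pz2 : word P (shed w ++ r) by apply: perm_word Pw; rewrite perm_sym perm_shed_cat.
have count_z1 a : count_mem a (shed u ++ r) = count_mem a u.
  by move/permP: (perm_shed_cat ur mem_ru) => /(_ (pred1 a)).
exists (shed w ++ r); split=> //; split; last by apply/cshift_sym/cshift_shed.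
exists (shed u ++ r); split=> //; split.
  by exists u; split=> //; split; [apply: rst_refl | apply: cshift_shed].
apply: (@cshift_swap _ _ p q r) => //.
- by rewrite (permPl (perm_shed_cat ur mem_ru)) (permPr (perm_shed_cat ur mem_rw)).
- by rewrite undup_last_shed_cat // iota_u catA.
- by rewrite undup_last_shed_cat // iota_w catA.
- by move=> a; rewrite -iota_u count_z1 mem_filter => /andP[/eqP].
- by move=> a; rewrite count_z1 mem_ru.
Qed.

End CyclicShifts.

Section Distance.
Variable P : pred nat.

Lemma connectedP u w : word P u -> word P w ->
  connected P u w <-> perm_eq u w /\ is_rotation (iota_w u) (iota_w w).
Proof.
move=> Pu Pw; split=> [[k /walk_inv //]|[uw [p [q [iota_u iota_w]]]]].
by exists 3; apply: walk3_of_rotation iota_u iota_w.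
Qed.

Lemma connected_dist_le3 u w : word P u -> word P w -> connected P u w -> dist_le P 3 u w.
Proof.
move=> Pu Pw /(connectedP Pu Pw)[uw [p [q [iota_u iota_w]]]].
by exists 3; split=> //; apply: walk3_of_rotation iota_u iota_w.
Qed.

(* A finite list containing the orders of all cyclic shifts of the elements with
   evaluation [L] and order [o]. *)
Definition shift_orders (L o : seq nat) : seq (seq nat) :=
  [seq undup_last (rot k s) | s <- [seq s <- permutations L | undup_last s == o],
                              k <- iota 0 (size L).+1].

Lemma cshift_orders z w L : cshift P z w -> perm_eq z L ->
  perm_eq w L /\ undup_last w \in shift_orders L (undup_last z).
Proof.
move=> zw zL; split.
  by apply: (perm_trans _ zL); rewrite perm_sym; case: (cshift_inv zw).
case: zw => [x [y [_ [_ [/stal_eq_inv[zxy zxy'] /stal_eq_inv[_ ->]]]]]].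
rewrite -(rot_size_cat x y); apply: allpairs_f.
  rewrite mem_filter zxy' eqxx mem_permutations /=.
  by apply: (perm_trans _ zL); rewrite perm_sym.
by rewrite mem_iota ltnS -(perm_size zL) (perm_size zxy) size_cat /= leq_addr.
Qed.

Lemma not_walk_3321_3312 k : k < 3 -> ~ walk P k [:: 3; 3; 2; 1] [:: 3; 3; 1; 2].
Proof.
case: k => [_ /stal_eq_inv[] //|[_ |[_|//]]] /=.
  move=> [z [_ [/stal_eq_inv[u0z u0z'] /cshift_orders zw0]]].
  have zL : perm_eq z [:: 3; 3; 2; 1] by rewrite perm_sym.
  by have [_] := zw0 _ zL; rewrite -u0z'; vm_compute.
move=> [z [_ [[z' [_ [/stal_eq_inv[u0z u0z'] /cshift_orders z'z]]]]]].
move=> /cshift_sym/cshift_orders zw0.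
have z'L : perm_eq z' [:: 3; 3; 2; 1] by rewrite perm_sym.
have [_ zo] := z'z _ z'L; rewrite -u0z' in zo.
have [_ zo'] := zw0 [:: 3; 3; 2; 1] isT.
suff : has (mem (shift_orders [:: 3; 3; 2; 1] [:: 3; 1; 2]))
           (shift_orders [:: 3; 3; 2; 1] [:: 3; 2; 1]) by vm_compute.
by apply/hasP; exists (undup_last z).
Qed.

Lemma max_diam3 : P 1 -> P 2 -> P 3 -> max_diam P 3.
Proof.
move=> P1 P2 P3; split; first exact: connected_dist_le3.
exists [:: 3; 3; 2; 1], [:: 3; 3; 1; 2]; rewrite /word /= P1 P2 P3.
do 3!split=> //; last exact: not_walk_3321_3312.
by apply: (@walk3_of_rotation P _ _ [:: 2] [:: 1]); rewrite /word /= ?P1 ?P2 ?P3.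
Qed.

End Distance.

Lemma max_diam_alphAn2 : max_diam (alphAn 2) 1.
Proof.
split=> [u w Pu Pw [k /walk_inv[uw _]]|].
  have small : size (undup_last u) <= 2.
    rewrite -[2]/(size [:: 1; 2]) uniq_leq_size ?undup_last_uniq // => a.
    by rewrite mem_undup_last => /(allP Pu); rewrite /alphAn !inE; case: a => [|[|[]]].
  have uw' : perm_eq (undup_last u) (undup_last w).
    by rewrite uniq_perm ?undup_last_uniq // => a; rewrite !mem_undup_last (perm_mem uw).
  exists 1; split=> //; exists u; split=> //; split; first exact: rst_refl.
  exact: cshift_of_rotation Pu uw (perm_small_rotation small uw').
exists [:: 1; 2], [:: 2; 1]; do 3!split=> //; last by case=> // _ /stal_eq_inv[].
exists [:: 1; 2]; split=> //; split; first exact: rst_refl.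
by exists [:: 1], [:: 2]; do 3!split=> //; apply: rst_refl.
Qed.

Lemma max_diam_alphAn1 : max_diam (alphAn 1) 0.
Proof.
have nseq1 u : word (alphAn 1) u -> u = nseq (size u) 1.
  by move=> Pu; apply/all_pred1P; apply: sub_all Pu => -[|[|]].
split=> [u w Pu Pw [k /walk_inv[uw _]]|]; last first.
  by exists [::], [::]; do 3!split=> //; apply: rst_refl.
by exists 0; split=> //=; rewrite (nseq1 u Pu) (nseq1 w Pw) (perm_size uw); apply: rst_refl.
Qed.

Theorem mainTheorem6 :
  (forall u w : seq nat, word alphA u -> word alphA w ->
     (connected alphA u w <->
      (perm_eq u w /\ exists p q : seq nat, iota_w u = p ++ q /\ iota_w w = q ++ p)))
  /\ max_diam alphA 3
  /\ (forall n : nat,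
        (3 <= n -> max_diam (alphAn n) 3) /\
        (n = 2 -> max_diam (alphAn n) 1) /\
        (n = 1 -> max_diam (alphAn n) 0)).
Proof.
split; first exact: connectedP.
split; first exact: max_diam3.
move=> n; split=> [n3|]; first by apply: max_diam3; rewrite /alphAn /= (leq_trans _ n3).
by split=> ->; [exact: max_diam_alphAn2 | exact: max_diam_alphAn1].
Qed.
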